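(* Suppose $k$ is a finite field with the trivial absolute value or a local field, and let $X$ be a topological space. For every maximal ideal $m$ of $C_{bd}(X,k)$ the quotient $C_{bd}(X,k)/m$ is $k$, and denoting by $f(m)\in k$ the image of $f$, one has $C_{bd}(X,k)=k\oplus m$ orthogonally and $$\|f\|=\sup_{m\in\mathrm{Max}(C_{bd}(X,k))}|f(m)|\quad\text{for all } f\in C_{bd}(X,k).$$
   Context: A local field means a complete discretely valued field with finite residue field. $C_{bd}(X,k)$ is the $k$-algebra of bounded continuous functions $X\to k$ with the supremum norm $\|f\|=\sup_{x\in X}|f(x)|$; $\mathrm{Max}$ denotes the set of maximal ideals. Orthogonal means $\|a+g\|=\max\{|a|,\|g\|\}$ for $a\in k$, $g\in m$. *)

From HB Require Import structures.
From mathcomp Require Import all_boot all_algebra.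
From Stdlib Require Import Reals ClassicalEpsilon.

Set Implicit Arguments.
Unset Strict Implicit.
Unset Printing Implicit Defensive.

Local Open Scope R_scope.

Section ValuedField.
Variable k : fieldType.
Variable abs : k -> R.

Definition is_absval : Prop :=
  (forall x, 0 <= abs x) /\
  (forall x, abs x = 0 <-> x = (@GRing.zero k)) /\
  (forall x y, abs (GRing.mul x y) = abs x * abs y) /\
  (forall x y, abs (GRing.add x y) <= abs x + abs y).

Definition nonarchimedean : Prop :=
  forall x y, abs (GRing.add x y) <= Rmax (abs x) (abs y).

Definition finite_trivially_valued : Prop :=
  (exists s : seq k, forall x : k, x \in s) /\
  (forall x : k, abs x = if x == (@GRing.zero k) then 0 else 1).

Definition discretely_valued : Prop :=
  is_absval /\ nonarchimedean /\
  exists pi : k, 0 < abs pi < 1 /\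
    forall x : k, x != (@GRing.zero k) -> exists n : Z, abs x = powerRZ (abs pi) n.

Definition complete_field : Prop :=
  forall u : nat -> k,
    (forall eps, 0 < eps -> exists N, forall n m, (N <= n)%nat -> (N <= m)%nat ->
        abs (GRing.add (u n) (GRing.opp (u m))) < eps) ->
    exists l : k, forall eps, 0 < eps -> exists N, forall n, (N <= n)%nat ->
        abs (GRing.add (u n) (GRing.opp l)) < eps.

(* residue field O/mO, O = {|x| <= 1}, mO = {|x| < 1}, is finite *)
Definition finite_residue_field : Prop :=
  exists s : seq k, (forall y, y \in s -> abs y <= 1) /\
    forall x : k, abs x <= 1 -> exists2 y, y \in s & abs (GRing.add x (GRing.opp y)) < 1.

Definition local_field : Prop :=
  discretely_valued /\ complete_field /\ finite_residue_field.

End ValuedField.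

(* supremum of a set of nonnegative reals, with the convention sup(empty) = 0 *)
Definition supR (S : R -> Prop) : R :=
  epsilon (inhabits 0) (fun r => is_lub (fun y => y = 0 \/ S y) r).

Definition is_topology (X : Type) (op : (X -> Prop) -> Prop) : Prop :=
  op (fun _ => True) /\ op (fun _ => False) /\
  (forall U V, op U -> op V -> op (fun x => U x /\ V x)) /\
  (forall (I : Type) (F : I -> X -> Prop), (forall i, op (F i)) ->
      op (fun x => exists i, F i x)).

Section Cbd.
Variable k : fieldType.
Variable abs : k -> R.
Variable X : Type.
Variable op : (X -> Prop) -> Prop.

Definition fconst (a : k) : X -> k := fun _ => a.
Definition fadd (f g : X -> k) : X -> k := fun x => GRing.add (f x) (g x).
Definition fsub (f g : X -> k) : X -> k := fun x => GRing.add (f x) (GRing.opp (g x)).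
Definition fmul (f g : X -> k) : X -> k := fun x => GRing.mul (f x) (g x).

Definition continuous (f : X -> k) : Prop :=
  forall x eps, 0 < eps -> exists U, op U /\ U x /\
     forall y, U y -> abs (GRing.add (f y) (GRing.opp (f x))) < eps.

Definition bounded (f : X -> k) : Prop :=
  exists M, forall x, abs (f x) <= M.

Definition Cbd (f : X -> k) : Prop := continuous f /\ bounded f.

Definition supnorm (f : X -> k) : R := supR (fun r => exists x, r = abs (f x)).

Definition is_ideal (I : (X -> k) -> Prop) : Prop :=
  (forall f, I f -> Cbd f) /\
  I (fconst (@GRing.zero k)) /\
  (forall f g, I f -> I g -> I (fadd f g)) /\
  (forall h f, Cbd h -> I f -> I (fmul h f)).

Definition is_maximal_ideal (m : (X -> k) -> Prop) : Prop :=
  is_ideal m /\ ~ m (fconst (@GRing.one k)) /\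
  forall J, is_ideal J -> (forall f, m f -> J f) ->
     (forall f, J f -> m f) \/ J (fconst (@GRing.one k)).

(* f(m): the image of f in C_bd(X,k)/m = k, i.e. the a with f - a in m *)
Definition evalm (m : (X -> k) -> Prop) (f : X -> k) : k :=
  epsilon (inhabits (@GRing.zero k)) (fun a => m (fsub f (fconst a))).

End Cbd.

(* Only four properties of the valued field k are used: |.| is an
   ultrametric absolute value, k is complete, and every ball of k is
   totally bounded (covered by finitely many r-balls for each r > 0).
   Both finite trivially valued fields and local fields have them
   (field_properties; for a local field, residue digits and rescaling by
   the uniformizer give the finite covers).

   Fix a maximal ideal m of C_bd(X,k).  It contains no function bounded
   away from 0, is prime, and is closed for the sup norm.  Given f, cover
   the (bounded) range of f by finitely many r-balls B(y_i, r); the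
   indicators of the clopen sets f^-1(B(y_i, r)) are continuous and the
   product of the 1 - indicator functions vanishes, so by primality some
   1 - indicator lies in m, i.e. f is within r of a constant modulo m.
   Letting r -> 0 yields a Cauchy sequence of constants whose limit a
   satisfies f - a in m (m closed), and a is unique.  Orthogonality of
   k + m follows from the ultrametric inequality, hence |f(m)| <= ||f||,
   while the point ideals {g | g(x) = 0} give f(m_x) = f(x), which yields
   the reverse inequality for the supremum over Max(C_bd(X,k)). *)

From Pilot Require Import Defs.
From mathcomp Require Import all_boot all_algebra.
From Stdlib Require Import Reals Lra Lia ClassicalEpsilon FunctionalExtensionality Classical.
(* Stdlib's field tactic on R, saved before MathComp's ring/field tactics
   (used on the field k) shadow it. *)
Ltac R_field := field.
From mathcomp.algebra_tactics Require Import ring.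

Set Implicit Arguments.
Unset Strict Implicit.
Unset Printing Implicit Defensive.
Import GRing.Theory.

Local Open Scope R_scope.

Lemma supR_lub (S : R -> Prop) : bound (fun y => y = 0 \/ S y) ->
  is_lub (fun y => y = 0 \/ S y) (supR S).
Proof.
move=> Sb; apply: epsilon_spec.
by have [l Hl] := completeness _ Sb (ex_intro _ 0 (or_introl erefl)); exists l.
Qed.

Lemma supR_unique (S : R -> Prop) l : is_lub (fun y => y = 0 \/ S y) l -> supR S = l.
Proof.
move=> Sl; have [u1 l1] := supR_lub (ex_intro _ l (proj1 Sl)).
by case: Sl => u2 l2; apply: Rle_antisym; [apply: l1|apply: l2].
Qed.

Lemma pow_le_one (q : R) n : 0 <= q <= 1 -> q ^ n <= 1.
Proof.
move=> [q0 q1]; elim: n => [|n IH] /=; first lra.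
by have := pow_le q n q0; nra.
Qed.

Lemma pow_eventually_small (q : R) : 0 <= q < 1 ->
  forall eps, 0 < eps -> exists N, forall n, (N <= n)%nat -> q ^ n < eps.
Proof.
move=> q01 eps eps0; have qa : Rabs q < 1 by rewrite Rabs_pos_eq; lra.
have [N HN] := pow_lt_1_zero q qa eps eps0; exists N => n /leP Nn.
by have := HN n Nn; rewrite Rabs_pos_eq //; apply: pow_le; lra.
Qed.

Section AbsoluteValue.
Variable k : fieldType.
Variable abs : k -> R.
Hypothesis Habs : is_absval abs.

Local Notation k0 := (@GRing.zero k).
Local Notation k1 := (@GRing.one k).

Lemma abs_ge0 x : 0 <= abs x.
Proof. by case: Habs. Qed.

Lemma abs0 : abs k0 = 0.
Proof. by case: Habs => _ [H _]; apply H. Qed.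

Lemma absM x y : abs (GRing.mul x y) = abs x * abs y.
Proof. by case: Habs => _ [_ [H _]]. Qed.

Lemma absD x y : abs (GRing.add x y) <= abs x + abs y.
Proof. by case: Habs => _ [_ [_ H]]. Qed.

Lemma abs_eq0 x : abs x = 0 -> x = k0.
Proof. by case: Habs => _ [/(_ x) []]. Qed.

Lemma abs_gt0 x : x <> k0 -> 0 < abs x.
Proof.
move=> nx; case: (Rle_lt_or_eq_dec _ _ (abs_ge0 x)) => // /esym /abs_eq0.
by move/nx.
Qed.

Lemma one_neq0 : k1 <> k0.
Proof. exact: (elimN eqP (oner_neq0 k)). Qed.

Lemma abs1 : abs k1 = 1.
Proof.
have e : abs k1 = abs k1 * abs k1 by rewrite -absM mulr1.
have := abs_gt0 one_neq0; nra.
Qed.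

Lemma absN x : abs (GRing.opp x) = abs x.
Proof.
have e : abs (GRing.opp k1) * abs (GRing.opp k1) = 1 by rewrite -absM mulrNN mulr1 abs1.
have e1 : abs (GRing.opp k1) = 1 by have := abs_ge0 (GRing.opp k1); nra.
by rewrite -mulN1r absM e1 Rmult_1_l.
Qed.

Lemma absV x : x <> k0 -> abs (GRing.inv x) = / abs x.
Proof.
move=> nx; have := abs_gt0 nx => ax.
have e : abs (GRing.inv x) * abs x = 1 by rewrite -absM mulVf ?abs1 //; apply/eqP.
by apply: (Rmult_eq_reg_r (abs x)); [rewrite e Rinv_l //; lra|lra].
Qed.

End AbsoluteValue.

Section Nonarchimedean.
Variables (k : fieldType) (abs : k -> R).
Hypotheses (Habs : is_absval abs) (Hna : nonarchimedean abs).

Local Notation sub a b := (GRing.add a (GRing.opp b)).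

Lemma ultra_sub x y z : abs (sub x z) <= Rmax (abs (sub x y)) (abs (sub y z)).
Proof. by have -> : sub x z = GRing.add (sub x y) (sub y z) by ring. Qed.

Lemma ultra_eq a b : abs b < abs a -> abs (GRing.add a b) = abs a.
Proof.
move=> ba; apply: Rle_antisym; first by have := Hna a b; rewrite Rmax_left //; lra.
have := Hna (GRing.add a b) (GRing.opp b); rewrite addrK (absN Habs).
by move=> /Rmax_Rle [|]; lra.
Qed.

End Nonarchimedean.

Definition totally_bounded (k : fieldType) (abs : k -> R) : Prop :=
  forall M r, 0 < r -> exists s : seq k,
    forall z, abs z <= M -> exists2 y, y \in s & abs (GRing.add z (GRing.opp y)) < r.

Lemma finite_totally_bounded (k : fieldType) (abs : k -> R) :
  is_absval abs -> (exists s : seq k, forall x, x \in s) -> totally_bounded abs.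
Proof.
move=> Habs [s Hs] M r rp; exists s => z _; exists z => //.
by rewrite subrr (abs0 Habs).
Qed.

Section FiniteTrivial.
Variables (k : fieldType) (abs : k -> R).
Hypothesis Htriv : forall x : k, abs x = if x == @GRing.zero k then 0 else 1.

Lemma trivial_abs_le1 x : abs x <= 1.
Proof. by rewrite Htriv; case: ifP => _; lra. Qed.

Lemma trivial_nonarchimedean : nonarchimedean abs.
Proof.
move=> x y; case: (eqVneq x (@GRing.zero k)) => [->|nx].
  by rewrite add0r; apply: Rmax_r.
apply: Rle_trans (trivial_abs_le1 _) _.
by rewrite (Htriv x) (negbTE nx); apply: Rmax_l.
Qed.

Lemma trivial_absval : is_absval abs.
Proof.
have ge0 x : 0 <= abs x by rewrite Htriv; case: ifP => _; lra.
split=> //; split.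
  by move=> x; rewrite Htriv; split; [case: eqP => // _; lra|move=> ->; rewrite eqxx].
split.
  by move=> x y; rewrite !Htriv mulf_eq0; case: (_ == _); case: (_ == _) => /=; lra.
move=> x y; apply: Rle_trans (trivial_nonarchimedean x y) _.
by have := ge0 x; have := ge0 y; rewrite /Rmax; case: Rle_dec; lra.
Qed.

(* A Cauchy sequence for the trivial absolute value is eventually constant. *)
Lemma trivial_complete : complete_field abs.
Proof.
move=> u Hu; have [N HN] := Hu (1 / 2) ltac:(lra).
exists (u N) => eps He; exists N => n Hn.
by move: (HN n N Hn (leqnn N)); rewrite !Htriv; case: ifP; lra.
Qed.

End FiniteTrivial.

Section LocalField.
Variables (k : fieldType) (abs : k -> R).
Hypothesis Habs : is_absval abs.
Variable pi : k.
Hypothesis Hpi : 0 < abs pi < 1.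
Hypothesis Hdisc : forall x : k, x != @GRing.zero k -> exists n : Z, abs x = powerRZ (abs pi) n.
Variable res : seq k.
Hypothesis Hres : forall x : k, abs x <= 1 ->
  exists2 y, y \in res & abs (GRing.add x (GRing.opp y)) < 1.

Local Notation k0 := (@GRing.zero k).
Local Notation sub a b := (GRing.add a (GRing.opp b)).
Local Notation p := (abs pi).

Lemma pi_neq0 : pi <> k0.
Proof. by move=> e; move: Hpi; rewrite e (abs0 Habs); lra. Qed.

Lemma abs_pi_pow j : abs (GRing.exp pi j) = p ^ j.
Proof.
elim: j => [|j IH]; first by rewrite expr0 (abs1 Habs).
by rewrite exprS (absM Habs) IH.
Qed.

(* Since the value group is generated by |pi| < 1, the largest value < 1 is |pi|. *)
Lemma abs_lt1_le_pi z : abs z < 1 -> abs z <= p.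
Proof.
move=> z1; case: (eqVneq z k0) => [->|nz]; first by rewrite (abs0 Habs); lra.
have [n en] := Hdisc nz; rewrite en in z1 *.
have p01 : 0 <= p <= 1 by lra.
case: n {en} z1 => [|q|q] /= z1; first lra.
- have [j ej] := Pos2Nat.is_succ q; rewrite ej /=.
  have := pow_le_one j p01; nra.
- have [j ej] := Pos2Nat.is_succ q.
  have [_ t1] : 0 <= p ^ Pos.to_nat q < 1 by apply: pow_lt_1_compat; [lra|lia].
  have tp : 0 < p ^ Pos.to_nat q by apply: pow_lt; lra.
  have := Rmult_lt_compat_l _ _ _ tp z1.
  by rewrite Rinv_r ?Rmult_1_r; lra.
Qed.

(* The unit ball is covered by finitely many closed balls of radius |pi|^n:
   peel off one residue digit at a time. *)
Lemma unit_ball_cover n : exists s : seq k, forall z, abs z <= 1 ->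
  exists2 y, y \in s & abs (sub z y) <= p ^ n.
Proof.
elim: n => [|n [s IH]].
  exists [:: k0] => z z1; exists k0; first by rewrite mem_seq1.
  by rewrite oppr0 addr0.
exists [seq GRing.add y0 (GRing.mul pi y) | y0 <- res, y <- s] => z z1.
have [y0 y0res zy0] := Hres z1.
have [t et] : exists t, sub z y0 = GRing.mul pi t.
  exists (GRing.mul (sub z y0) (GRing.inv pi)).
  by rewrite mulrCA mulfV ?mulr1 //; apply/eqP; exact: pi_neq0.
have t1 : abs t <= 1.
  have := abs_lt1_le_pi zy0; rewrite et (absM Habs).
  have := abs_ge0 Habs t; nra.
have [y ys ty] := IH t t1.
exists (GRing.add y0 (GRing.mul pi y)); first exact: allpairs_f.
have -> : sub z (GRing.add y0 (GRing.mul pi y)) = GRing.mul pi (sub t y).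
  by rewrite -[z](subrK y0) et; ring.
rewrite (absM Habs) /=; apply: Rmult_le_compat_l => //; lra.
Qed.

(* Rescaling by a power of pi moves any ball into the unit ball. *)
Lemma local_totally_bounded : totally_bounded abs.
Proof.
move=> M r rp.
have M1 : 0 < Rmax M 1 by have := Rmax_r M 1; lra.
have pJ0 j : 0 < p ^ j by apply: pow_lt; lra.
have p01 : 0 <= p < 1 by lra.
have [J /(_ J (leqnn J)) pJ] := pow_eventually_small p01 (Rinv_0_lt_compat _ M1).
have [N /(_ N (leqnn N)) pN] :=
  pow_eventually_small p01 (Rmult_lt_0_compat _ _ rp (pJ0 J)).
have [s Hs] := unit_ball_cover N.
have piJ : GRing.exp pi J <> k0.
  by apply/eqP; apply: expf_neq0; apply/eqP; exact: pi_neq0.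
exists [seq GRing.mul y (GRing.inv (GRing.exp pi J)) | y <- s] => z zM.
set w := GRing.mul z (GRing.exp pi J).
have w1 : abs w <= 1.
  rewrite /w (absM Habs) abs_pi_pow.
  have := Rinv_r _ (Rgt_not_eq _ _ M1); have := Rmax_l M 1.
  have := abs_ge0 Habs z; have := pJ0 J; nra.
have [y ys wy] := Hs w w1.
exists (GRing.mul y (GRing.inv (GRing.exp pi J))); first exact: map_f.
have e : GRing.mul (sub z (GRing.mul y (GRing.inv (GRing.exp pi J)))) (GRing.exp pi J) =
         sub w y.
  by rewrite /w mulrBl -mulrA mulVf ?mulr1 //; apply/eqP.
apply: (Rmult_lt_reg_r (p ^ J)); first exact: pJ0.
by rewrite -{1}abs_pi_pow -(absM Habs) e; exact: Rle_lt_trans wy pN.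
Qed.

End LocalField.

Lemma field_properties (k : fieldType) (abs : k -> R) :
  finite_trivially_valued abs \/ local_field abs ->
  [/\ is_absval abs, nonarchimedean abs, complete_field abs & totally_bounded abs].
Proof.
case=> [[fin Htriv]|[[Habs [Hna [pi [Hpi Hdisc]]]] [Hc [res [_ Hres]]]]].
  have Habs := trivial_absval Htriv.
  split=> //; [exact: trivial_nonarchimedean|exact: trivial_complete|].
  exact: finite_totally_bounded.
by split=> //; apply: (local_totally_bounded Habs Hpi Hdisc Hres).
Qed.

Section BoundedContinuous.
Variables (k : fieldType) (abs : k -> R).
Hypothesis Habs : is_absval abs.
Variables (X : Type) (op : (X -> Prop) -> Prop).
Hypothesis Hop : is_topology op.

Local Notation k0 := (@GRing.zero k).
Local Notation k1 := (@GRing.one k).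
Local Notation sub a b := (GRing.add a (GRing.opp b)).
Local Notation CB := (Cbd abs op).

Lemma fext (P : (X -> k) -> Prop) f g : P f -> (forall x, f x = g x) -> P g.
Proof. by move=> Pf e; have <- : f = g by apply: functional_extensionality. Qed.

Lemma bounded_pos (f : X -> k) : Defs.bounded abs f -> exists2 M, 0 < M & forall x, abs (f x) <= M.
Proof.
case=> M HM; exists (Rmax M 0 + 1); first by have := Rmax_r M 0; lra.
by move=> x; have := HM x; have := Rmax_l M 0; lra.
Qed.

Lemma continuous2 f g x d1 d2 : Defs.continuous abs op f -> Defs.continuous abs op g ->
  0 < d1 -> 0 < d2 -> exists U, [/\ op U, U x & forall y, U y ->
    abs (sub (f y) (f x)) < d1 /\ abs (sub (g y) (g x)) < d2].
Proof.
move=> cf cg d1p d2p.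
have [U [oU [Ux HU]]] := cf x d1 d1p; have [V [oV [Vx HV]]] := cg x d2 d2p.
exists (fun y => U y /\ V y); split=> //; last by move=> y [Uy Vy]; split; auto.
by case: Hop => _ [_ [Hand _]]; apply: Hand.
Qed.

Lemma Cbd_const a : CB (fconst a).
Proof.
split; last by exists (abs a) => x; apply: Rle_refl.
move=> x eps He; exists (fun _ => True); split; first by case: Hop.
by split=> // y _; rewrite /fconst subrr (abs0 Habs).
Qed.

Lemma Cbd_add f g : CB f -> CB g -> CB (fadd f g).
Proof.
move=> [cf [Mf bf]] [cg [Mg bg]]; split.
  move=> x eps He.
  have [U [oU Ux HU]] :=
    continuous2 x cf cg (d1 := eps / 2) (d2 := eps / 2) ltac:(lra) ltac:(lra).
  exists U; split=> //; split=> // y /HU [fy gy]; rewrite /fadd.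
  have -> : sub (GRing.add (f y) (g y)) (GRing.add (f x) (g x)) =
            GRing.add (sub (f y) (f x)) (sub (g y) (g x)) by ring.
  by have := absD Habs (sub (f y) (f x)) (sub (g y) (g x)); lra.
exists (Mf + Mg) => x; rewrite /fadd.
by have := absD Habs (f x) (g x); have := bf x; have := bg x; lra.
Qed.

Lemma Cbd_mul f g : CB f -> CB g -> CB (fmul f g).
Proof.
move=> [cf /bounded_pos [Mf Mfp bf]] [cg /bounded_pos [Mg Mgp bg]].
have absfg x : abs (fmul f g x) = abs (f x) * abs (g x) by rewrite /fmul absM.
split; last first.
  exists (Mf * Mg) => x; rewrite absfg.
  by have := abs_ge0 Habs (f x); have := abs_ge0 Habs (g x); have := bf x; have := bg x; nra.
move=> x eps He; set d := eps / (Mf + Mg).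
have dp : 0 < d by apply: Rdiv_lt_0_compat; lra.
have ed : d * Mg + Mf * d = eps by rewrite /d; R_field; lra.
have [U [oU Ux HU]] := continuous2 x cf cg dp dp.
exists U; split=> //; split=> // y /HU [fy gy]; rewrite /fmul.
have -> : sub (GRing.mul (f y) (g y)) (GRing.mul (f x) (g x)) =
          GRing.add (GRing.mul (sub (f y) (f x)) (g y)) (GRing.mul (f x) (sub (g y) (g x))).
  by ring.
apply: Rle_lt_trans (absD Habs _ _) _; rewrite !absM //.
have := abs_ge0 Habs (sub (f y) (f x)); have := abs_ge0 Habs (sub (g y) (g x)).
have := abs_ge0 Habs (f x); have := abs_ge0 Habs (g y); have := bf x; have := bg y.
nra.
Qed.

Lemma Cbd_sub f g : CB f -> CB g -> CB (fsub f g).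
Proof.
move=> Hf Hg; apply: (@fext _ (fadd f (fmul (fconst (GRing.opp k1)) g))).
  by apply: Cbd_add => //; apply: Cbd_mul => //; apply: Cbd_const.
by move=> x; rewrite /fadd /fmul /fsub /fconst mulN1r.
Qed.

Lemma Cbd_inv h d : CB h -> 0 < d -> (forall x, d <= abs (h x)) ->
  CB (fun x => GRing.inv (h x)).
Proof.
move=> [ch _] dp hd.
have hn x : h x <> k0 by move=> e; have := hd x; rewrite e (abs0 Habs); lra.
have invb x : abs (GRing.inv (h x)) <= / d.
  by rewrite absV //; apply: Rinv_le_contravar.
split; last by exists (/ d).
move=> x eps He.
have dd : 0 < eps * (d * d) by apply: Rmult_lt_0_compat => //; nra.
have [U [oU [Ux HU]]] := ch x _ dd.
exists U; split=> //; split=> // y /HU hyx.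
have -> : sub (GRing.inv (h y)) (GRing.inv (h x)) =
          GRing.opp (GRing.mul (GRing.mul (sub (h y) (h x)) (GRing.inv (h x))) (GRing.inv (h y))).
  by have := hn x; have := hn y => /eqP hy /eqP hx; field; apply/andP.
rewrite (absN Habs) !absM //.
have := abs_ge0 Habs (sub (h y) (h x)).
have := abs_ge0 Habs (GRing.inv (h x)); have := abs_ge0 Habs (GRing.inv (h y)).
have := invb x; have := invb y; move: hyx.
set A := abs (sub (h y) (h x)); set B := abs (GRing.inv (h x)); set C := abs (GRing.inv (h y)).
move=> hA hC hB C0 B0 A0; clearbody A B C.
have id0 := Rinv_0_lt_compat _ dp.
have e : eps * (d * d) * / d * / d = eps by R_field; lra.
have : A * B * C <= A * / d * / d by apply: Rmult_le_compat; nra.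
have : A * / d * / d < eps * (d * d) * / d * / d.
  by apply: Rmult_lt_compat_r => //; apply: Rmult_lt_compat_r.
lra.
Qed.

Definition fprod (G : k -> X -> k) (s : seq k) : X -> k :=
  foldr (fun y => fmul (G y)) (fconst k1) s.

Lemma Cbd_prod G s : (forall y, CB (G y)) -> CB (fprod G s).
Proof. by move=> GC; elim: s => [|y s IH] /=; [exact: Cbd_const|exact: Cbd_mul]. Qed.

Lemma fprod_vanish G s x y : y \in s -> G y x = k0 -> fprod G s x = k0.
Proof.
elim: s => [//|z s IH]; rewrite in_cons /= /fmul => /orP [/eqP <- ->|ys Gy].
  by rewrite mul0r.
by rewrite IH ?mulr0.
Qed.

Section MaximalIdeal.
Variable m : (X -> k) -> Prop.
Hypothesis Hm : is_maximal_ideal abs op m.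

Lemma m_Cbd f : m f -> CB f.
Proof. by case: Hm => [[H _] _]; apply: H. Qed.

Lemma m0 : m (fconst k0).
Proof. by case: Hm => [[_ [H _]] _]. Qed.

Lemma m_add f g : m f -> m g -> m (fadd f g).
Proof. by case: Hm => [[_ [_ [H _]]] _]; apply: H. Qed.

Lemma m_mul h f : CB h -> m f -> m (fmul h f).
Proof. by case: Hm => [[_ [_ [_ H]]] _]; apply: H. Qed.

Lemma m_not1 : ~ m (fconst k1).
Proof. by case: Hm => _ []. Qed.

Lemma m_sub f g : m f -> m g -> m (fsub f g).
Proof.
move=> mf mg; apply: (@fext m (fadd f (fmul (fconst (GRing.opp k1)) g))).
  by apply: m_add => //; apply: m_mul => //; apply: Cbd_const.
by move=> x; rewrite /fadd /fmul /fsub /fconst mulN1r.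
Qed.

(* m is proper, so it contains no unit, in particular no function bounded
   away from 0. *)
Lemma m_no_unit h d : m h -> 0 < d -> ~ (forall x, d <= abs (h x)).
Proof.
move=> mh dp hd; apply: m_not1.
have hn x : h x != k0 by apply/eqP => e; have := hd x; rewrite e (abs0 Habs); lra.
apply: (fext (m_mul (Cbd_inv (m_Cbd mh) dp hd) mh)) => x.
by rewrite /fmul /fconst mulVf.
Qed.

(* If a + g is uniformly within r of 0 for some g in m, then |a| <= r:
   otherwise g would be bounded away from 0. *)
Lemma m_const_bound g a r : m g -> (forall x, abs (GRing.add a (g x)) <= r) -> abs a <= r.
Proof.
move=> mg ar; apply: Rnot_lt_le => ra.
apply: (m_no_unit mg (d := abs a - r)); first lra.
move=> x; have := absD Habs (GRing.add a (g x)) (GRing.opp (g x)).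
by rewrite addrK (absN Habs); have := ar x; lra.
Qed.

Lemma m_comaximal u : CB u -> ~ m u ->
  exists a c, [/\ m a, CB c & forall x, k1 = GRing.add (a x) (GRing.mul (c x) (u x))].
Proof.
move=> uC nmu.
pose J g := CB g /\ exists a c, [/\ m a, CB c &
  forall x, g x = GRing.add (a x) (GRing.mul (c x) (u x))].
have mJ f : m f -> J f.
  move=> mf; split; first exact: m_Cbd.
  exists f, (fconst k0); split=> //; first exact: Cbd_const.
  by move=> x; rewrite /fconst mul0r addr0.
have JI : is_ideal abs op J.
  split; first by move=> f [].
  split; first exact: (mJ _ m0).
  split.
    move=> f g [fC [a1 [c1 [ma1 cc1 e1]]]] [gC [a2 [c2 [ma2 cc2 e2]]]].
    split; first exact: Cbd_add.
    exists (fadd a1 a2), (fadd c1 c2); split; [exact: m_add|exact: Cbd_add|].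
    by move=> x; rewrite /fadd e1 e2; ring.
  move=> h f hC [fC [a1 [c1 [ma1 cc1 e1]]]].
  split; first exact: Cbd_mul.
  exists (fmul h a1), (fmul h c1); split; [exact: m_mul|exact: Cbd_mul|].
  by move=> x; rewrite /fmul e1; ring.
case: Hm => _ [_ /(_ J JI mJ)] [Jm|[_ [a [c [ma cc e]]]]]; last by exists a, c.
exfalso; apply/nmu/Jm; split=> //.
exists (fconst k0), (fconst k1); split; [exact: m0|exact: Cbd_const|].
by move=> x; rewrite /fconst mul1r add0r.
Qed.

(* Maximal ideals are prime: if u is not in m, then v = v (a + c u) is. *)
Lemma m_prime u v : CB u -> CB v -> m (fmul u v) -> m u \/ m v.
Proof.
move=> uC vC muv; case: (classic (m u)) => [|nu]; [by left|right].
have [a [c [ma cc e]]] := m_comaximal uC nu.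
apply: (@fext m (fadd (fmul v a) (fmul c (fmul u v)))).
  by apply: m_add; apply: m_mul.
by move=> x; rewrite /fadd /fmul -[RHS]mulr1 [in RHS](e x); ring.
Qed.

Lemma m_prime_prod G s : (forall y, CB (G y)) -> m (fprod G s) -> exists2 y, y \in s & m (G y).
Proof.
move=> GC; elim: s => [/m_not1 //|y s IH] /=.
case/(m_prime (GC y) (Cbd_prod s GC)) => [my|/IH [z zs mz]].
  by exists y; rewrite ?mem_head.
by exists z; rewrite // in_cons zs orbT.
Qed.

(* m is closed for the sup norm: 1 - c e is a unit whenever |c e| <= 1/2. *)
Lemma m_closed f : CB f ->
  (forall eps, 0 < eps -> exists e, m (fsub f e) /\ forall x, abs (e x) <= eps) -> m f.
Proof.
move=> fC H; apply: NNPP => nf.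
have [a [c [ma cC e]]] := m_comaximal fC nf.
have [C Cp cb] := bounded_pos (proj2 cC).
have [g [mg gb]] := H (/ (2 * C)) ltac:(apply: Rinv_0_lt_compat; lra).
apply: (m_no_unit (h := fadd a (fmul c (fsub f g))) (d := / 2)).
- by apply: m_add => //; apply: m_mul.
- lra.
move=> x.
have -> : fadd a (fmul c (fsub f g)) x = GRing.add k1 (GRing.opp (GRing.mul (c x) (g x))).
  by rewrite /fadd /fmul /fsub (e x); ring.
have := absD Habs (GRing.add k1 (GRing.opp (GRing.mul (c x) (g x)))) (GRing.mul (c x) (g x)).
rewrite subrK (abs1 Habs) absM //.
have : abs (c x) * abs (g x) <= C * / (2 * C).
  by apply: Rmult_le_compat => //; apply: abs_ge0.
have -> : C * / (2 * C) = / 2 by R_field; lra.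
lra.
Qed.

Definition m_approx (f : X -> k) (y : k) (r : R) : Prop :=
  exists e, m (fsub (fsub f (fconst y)) e) /\ forall x, abs (e x) <= r.

Lemma m_approx_exact f a : m (fsub f (fconst a)) -> m_approx f a 0.
Proof.
move=> ma; exists (fconst k0); split; last by move=> x; rewrite (abs0 Habs); lra.
by apply: (fext ma) => x; rewrite /fsub /fconst oppr0 addr0.
Qed.

Lemma m_approx_close f y1 y2 r1 r2 :
  m_approx f y1 r1 -> m_approx f y2 r2 -> abs (sub y1 y2) <= r1 + r2.
Proof.
move=> [e1 [m1 b1]] [e2 [m2 b2]].
apply: (m_const_bound (m_sub m1 m2)) => x; rewrite /fsub /fconst.
have -> : GRing.add (sub y1 y2) (sub (sub (sub (f x) y1) (e1 x)) (sub (sub (f x) y2) (e2 x))) =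
          GRing.add (e2 x) (GRing.opp (e1 x)) by ring.
by have := absD Habs (e2 x) (GRing.opp (e1 x)); rewrite (absN Habs); have := b1 x; have := b2 x; lra.
Qed.

Lemma m_eval_unique f a b : m (fsub f (fconst a)) -> m (fsub f (fconst b)) -> a = b.
Proof.
move=> ma mb; have := m_approx_close (m_approx_exact ma) (m_approx_exact mb).
rewrite Rplus_0_l => ab; apply/eqP; rewrite -subr_eq0; apply/eqP.
by apply: (abs_eq0 Habs); apply: Rle_antisym => //; exact: abs_ge0.
Qed.

End MaximalIdeal.

Lemma supnorm_lub (h : X -> k) : Defs.bounded abs h ->
  is_lub (fun y => y = 0 \/ exists x, y = abs (h x)) (supnorm abs h).
Proof.
move=> [M HM]; apply: supR_lub; exists (Rmax M 0) => _ [->|[x ->]].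
  exact: Rmax_r.
by apply: Rle_trans (HM x) _; exact: Rmax_l.
Qed.

Lemma evalm_spec (m : (X -> k) -> Prop) f :
  (exists a, m (fsub f (fconst a))) -> m (fsub f (fconst (evalm m f))).
Proof. exact: epsilon_spec. Qed.

Definition point_ideal (x0 : X) : (X -> k) -> Prop := fun g => CB g /\ g x0 = k0.

Lemma point_ideal_maximal x0 : is_maximal_ideal abs op (point_ideal x0).
Proof.
split.
  split; first by move=> f [].
  split; first by split; [exact: Cbd_const|].
  split; first by move=> f g [fC f0] [gC g0]; split; [exact: Cbd_add|rewrite /fadd f0 g0 addr0].
  by move=> h f hC [fC f0]; split; [exact: Cbd_mul|rewrite /fmul f0 mulr0].
split; first by move=> [_]; exact: one_neq0.
move=> J [JC [_ [Jadd Jmul]]] mJ.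
case: (classic (exists g, J g /\ g x0 <> k0)) => [[g [Jg gx0]]|H]; last first.
  by left=> f Jf; split; [exact: JC|apply: NNPP => fx0; apply: H; exists f].
(* 1 = c g + (1 - c g) with c = 1/g(x0), and 1 - c g vanishes at x0. *)
right; set c := GRing.inv (g x0).
have t1 : J (fmul (fconst c) g) by apply: Jmul => //; exact: Cbd_const.
have t2 : J (fsub (fconst k1) (fmul (fconst c) g)).
  apply: mJ; split; first by apply: Cbd_sub; exact: Cbd_const || exact: JC.
  by rewrite /fsub /fmul /fconst /c mulVf ?subrr //; apply/eqP.
by apply: (fext (Jadd _ _ t1 t2)) => x; rewrite /fadd /fsub; ring.
Qed.

Lemma evalm_point x f : CB f -> evalm (point_ideal x) f = f x.
Proof.
move=> fC; have [_ e] : point_ideal x (fsub f (fconst (evalm (point_ideal x) f))).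
  apply: evalm_spec; exists (f x); split; first by apply: Cbd_sub => //; exact: Cbd_const.
  by rewrite /fsub /fconst subrr.
by apply/esym/eqP; rewrite -subr_eq0; apply/eqP.
Qed.

Section Ultrametric.
Hypotheses (Hna : nonarchimedean abs) (Hc : complete_field abs) (Htb : totally_bounded abs).

(* Indicator of the set where f is within r of y; it is continuous because
   balls of an ultrametric field are open and closed. *)
Definition ball_ind (f : X -> k) (r : R) (y : k) : X -> k :=
  fun x => if Rlt_dec (abs (sub (f x) y)) r then k1 else k0.

Lemma ball_ind_Cbd f r y : CB f -> 0 < r -> CB (ball_ind f r y).
Proof.
move=> [cf _] rp; split; last first.
  by exists 1 => x; rewrite /ball_ind; case: Rlt_dec => ?;
    rewrite ?(abs0 Habs) ?(abs1 Habs); lra.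
move=> x eps He; have [U [oU [Ux HU]]] := cf x r rp.
exists U; split=> //; split=> // z /HU fzx.
have near a b : abs (sub (f a) (f b)) < r ->
    abs (sub (f b) y) < r -> abs (sub (f a) y) < r.
  move=> hab hby; apply: Rle_lt_trans (ultra_sub Hna _ (f b) _) _.
  exact: Rmax_lub_lt.
have fxz : abs (sub (f x) (f z)) < r by rewrite -(absN Habs) opprB.
have -> : ball_ind f r y z = ball_ind f r y x.
  rewrite /ball_ind; case: Rlt_dec => h1; case: Rlt_dec => h2 //.
  - by case: h2; exact: near h1.
  - by case: h1; exact: near h2.
by rewrite subrr (abs0 Habs).
Qed.

Section AtMaximalIdeal.
Variable m : (X -> k) -> Prop.
Hypothesis Hm : is_maximal_ideal abs op m.

(* Cover the range of f by finitely many r-balls; the product of the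
   complementary indicators vanishes, so by primality m contains
   1 - ball_ind f r y for some y, and then f - y is in m + ball(0, r). *)
Lemma m_approx_exists f r : CB f -> 0 < r -> exists y, m_approx m f y r.
Proof.
move=> fC rp; have [M Mf] := proj2 fC; have [s Hs] := Htb M rp.
pose G y := fsub (fconst k1) (ball_ind f r y).
have GC y : CB (G y) by apply: Cbd_sub; [exact: Cbd_const|exact: ball_ind_Cbd].
have [y _ my] : exists2 y, y \in s & m (G y).
  apply: (m_prime_prod Hm) => //; apply: (fext (m0 Hm)) => x.
  have [y ys fy] := Hs (f x) (Mf x).
  apply/esym/(fprod_vanish ys).
  by rewrite /G /fsub /fconst /ball_ind; case: Rlt_dec => // ?; rewrite subrr.
exists y, (fmul (fsub f (fconst y)) (ball_ind f r y)); split.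
  apply: (fext (m_mul Hm (Cbd_sub fC (Cbd_const y)) my)) => x.
  by rewrite /G /fmul /fsub /fconst; ring.
move=> x; rewrite /fmul /fsub /fconst /ball_ind; case: Rlt_dec => h.
  by rewrite mulr1; lra.
by rewrite mulr0 (abs0 Habs); lra.
Qed.

(* Approximations with radii r_n -> 0 form a Cauchy sequence whose limit
   represents f modulo m, since m is closed. *)
Lemma m_eval_exists f : CB f -> exists a, m (fsub f (fconst a)).
Proof.
move=> fC.
have [r rp rsmall] : exists2 r : nat -> R, (forall n, 0 < r n) &
    forall eps, 0 < eps -> exists N, forall n, (N <= n)%nat -> r n < eps.
  exists (pow (/ 2)); first by move=> n; apply: pow_lt; lra.
  by apply: pow_eventually_small; lra.
pose u n := epsilon (inhabits k0) (fun y => m_approx m f y (r n)).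
have Pu n : m_approx m f (u n) (r n).
  exact: (epsilon_spec _ (fun y => m_approx m f y (r n)) (m_approx_exists fC (rp n))).
have [l Hl] : exists l, forall eps, 0 < eps -> exists N, forall n, (N <= n)%nat ->
    abs (sub (u n) l) < eps.
  apply: Hc => eps He; have [N HN] := rsmall (eps / 2) ltac:(lra).
  exists N => n p Nn Np.
  have := m_approx_close Hm (Pu n) (Pu p); have := HN n Nn; have := HN p Np; lra.
exists l; apply: (m_closed Hm); first by apply: Cbd_sub => //; exact: Cbd_const.
move=> eps He.
have [N1 HN1] := rsmall (eps / 2) ltac:(lra).
have [N2 HN2] := Hl (eps / 2) ltac:(lra).
have [e [me be]] := Pu (maxn N1 N2).
exists (fadd e (fconst (sub (u (maxn N1 N2)) l))); split.
  by apply: (fext me) => x; rewrite /fsub /fadd /fconst; ring.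
move=> x; rewrite /fadd /fconst.
have := absD Habs (e x) (sub (u (maxn N1 N2)) l); have := be x.
by have := HN1 _ (leq_maxl N1 N2); have := HN2 _ (leq_maxr N1 N2); lra.
Qed.

(* C_bd(X,k) = k + m is orthogonal: the lower bound |a| <= |a + g| comes
   from m_const_bound, the upper bound from the ultrametric inequality. *)
Lemma m_orthogonal a g : m g ->
  supnorm abs (fadd (fconst a) g) = Rmax (abs a) (supnorm abs g).
Proof.
move=> mg; have gC := m_Cbd Hm mg; have agC := Cbd_add (Cbd_const a) gC.
have [Nu Nl] := supnorm_lub (proj2 gC).
have [Ku Kl] := supnorm_lub (proj2 agC).
have Kx x : abs (GRing.add a (g x)) <= supnorm abs (fadd (fconst a) g).
  by apply: Ku; right; exists x.
have aK := m_const_bound Hm mg Kx.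
apply: Rle_antisym.
  apply: Kl => _ [->|[x ->]]; first by apply: Rle_trans (Rmax_l _ _); exact: abs_ge0.
  apply: Rle_trans (Hna _ _) _; apply: Rle_max_compat_l.
  by apply: Nu; right; exists x.
apply: Rmax_lub => //; apply: Nl => _ [->|[x ->]]; first by apply: Ku; left.
case: (Rle_lt_dec (abs (g x)) (abs a)) => [|ga]; first lra.
by rewrite -(ultra_eq Habs Hna ga) addrC; exact: Kx.
Qed.

(* |f(m)| <= ||f||, by orthogonality of f = f(m) + (f - f(m)). *)
Lemma abs_evalm_le f : CB f -> abs (evalm m f) <= supnorm abs f.
Proof.
move=> fC; set a := evalm m f.
have ma : m (fsub f (fconst a)) by apply: evalm_spec; exact: m_eval_exists.
have -> : f = fadd (fconst a) (fsub f (fconst a)).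
  by apply: functional_extensionality => x; rewrite /fadd /fsub /fconst; ring.
by rewrite m_orthogonal //; apply: Rmax_l.
Qed.

End AtMaximalIdeal.

(* Every point x of X gives the maximal ideal of functions vanishing at x,
   with f(m_x) = f(x); hence the sup over Max is at least ||f||. *)
Lemma sup_over_max_ideals f : CB f ->
  supnorm abs f = supR (fun r => exists m, is_maximal_ideal abs op m /\ r = abs (evalm m f)).
Proof.
move=> fC; have [Nu Nl] := supnorm_lub (proj2 fC).
apply/esym/supR_unique; split.
  move=> _ [->|[m [Hm ->]]]; [by apply: Nu; left|exact: abs_evalm_le].
move=> b Hb; apply: Nl => _ [->|[x ->]]; first by apply: Hb; left.
apply: Hb; right; exists (point_ideal x).
by rewrite evalm_point //; split=> //; exact: point_ideal_maximal.
Qed.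

End Ultrametric.

End BoundedContinuous.

Theorem mainTheorem12 (k : fieldType) (abs : k -> R)
  (Hk : finite_trivially_valued abs \/ local_field abs)
  (X : Type) (op : (X -> Prop) -> Prop) (HX : is_topology op) :
  (forall m : (X -> k) -> Prop, is_maximal_ideal abs op m ->
     (* k -> C_bd(X,k)/m is bijective, i.e. C_bd(X,k) = k (+) m *)
     (forall f, Cbd abs op f -> exists! a : k, m (fsub f (fconst a))) /\
     (* the decomposition is orthogonal *)
     (forall (a : k) (g : X -> k), m g ->
        supnorm abs (fadd (fconst a) g) = Rmax (abs a) (supnorm abs g))) /\
  (forall f, Cbd abs op f ->
     supnorm abs f =
     supR (fun r => exists m, is_maximal_ideal abs op m /\ r = abs (evalm m f))).
Proof.
have [Habs Hna Hc Htb] := field_properties Hk.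
split; last exact: (sup_over_max_ideals Habs HX Hna Hc Htb).
move=> m Hm; split; last exact: (m_orthogonal Habs HX Hna Hm).
move=> f fC; have [a ma] := m_eval_exists Habs HX Hna Hc Htb Hm fC.
by exists a; split=> // b; exact: (m_eval_unique Habs HX Hm ma).
Qed.
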